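(* Let $H$ be a real Hilbert space, $A:H\to c_0$ bounded linear with adjoint $A^*:\ell^1\to H$ (identifying $c_0^*=\ell^1$), let $H_n\subset H$ be a subspace of dimension $n$ with $\mathcal N(A)\cap H_n=\{0\}$. Let $f\in H$, let $u^\dagger\in\ell^1$ satisfy $A^*u^\dagger=f$, let $\delta>0$ and $f^\delta\in H$ with $\|f^\delta-f\|\le\delta$. Then every solution $u^n$ of $$\min_{u\in\ell^1}\|u\|_1\quad\text{subject to}\quad \langle z,A^*u\rangle=\langle z,f^\delta\rangle\ \ \forall z\in H_n$$ satisfies $\|u^n\|_1\le \delta\kappa_n+\|u^\dagger\|_1$.
   Context: $\kappa_n=\sup_{z\in H_n\setminus\{0\}}\dfrac{\|z\|}{\|Az\|_\infty}=\Big(\inf_{z\in H_n,\|z\|=1}\|Az\|_\infty\Big)^{-1}$, which is finite under $\mathcal N(A)\cap H_n=\{0\}$. $A^*$ is defined by $\langle A^*u,z\rangle=\sum_iu_i(Az)_i$. *)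

From HB Require Import structures.
From mathcomp Require Import all_boot all_order all_algebra.
From mathcomp Require Import all_classical all_reals all_analysis.
Set Implicit Arguments. Unset Strict Implicit. Unset Printing Implicit Defensive.
Import Order.TTheory GRing.Theory Num.Theory.
Import numFieldNormedType.Exports.
Local Open Scope classical_set_scope.
Local Open Scope ring_scope.

Definition is_inner_product (R : realType) (H : normedModType R)
  (ip : H -> H -> R) : Prop :=
  (forall x y, ip x y = ip y x) /\
  (forall a x y z, ip (a *: x + y) z = a * ip x z + ip y z) /\
  (forall x, `|x| ^+ 2 = ip x x).

Definition in_l1 (R : realType) (u : nat -> R) : Prop :=
  cvgn (series (fun k => `|u k|)).
Definition norm1 (R : realType) (u : nat -> R) : R :=
  limn (series (fun k => `|u k|)).

Definition in_c0 (R : realType) (x : nat -> R) : Prop := x @ \oo --> (0 : R).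
Definition supnorm (R : realType) (x : nat -> R) : R :=
  sup [set `|x i| | i in [set: nat]].

Definition bounded_linear_to_c0 (R : realType) (H : normedModType R)
  (A : H -> nat -> R) : Prop :=
  (forall a x y i, A (a *: x + y) i = a * A x i + A y i) /\
  (forall z, in_c0 (A z)) /\
  (exists C : R, forall z i, `|A z i| <= C * `|z|).

Definition is_adjoint (R : realType) (H : normedModType R)
  (ip : H -> H -> R) (A : H -> nat -> R) (Astar : (nat -> R) -> H) : Prop :=
  forall u, in_l1 u -> forall z,
    ip (Astar u) z = limn (series (fun i => u i * A z i)).

Definition subspace_of_dim (R : realType) (H : normedModType R)
  (Hn : set H) (n : nat) : Prop :=
  exists b : 'I_n -> H,
    (forall c : 'I_n -> R, \sum_(i < n) c i *: b i = 0 -> forall i, c i = 0) /\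
    Hn = [set x | exists c : 'I_n -> R, x = \sum_(i < n) c i *: b i].

Definition kappa (R : realType) (H : normedModType R)
  (A : H -> nat -> R) (Hn : set H) : R :=
  sup [set `|z| / supnorm (A z) | z in [set z | Hn z /\ z <> 0]].

Definition feasible (R : realType) (H : normedModType R)
  (ip : H -> H -> R) (Astar : (nat -> R) -> H) (Hn : set H) (fd : H)
  (u : nat -> R) : Prop :=
  in_l1 u /\ forall z, Hn z -> ip z (Astar u) = ip z fd.
Definition is_l1_minimizer (R : realType) (H : normedModType R)
  (ip : H -> H -> R) (Astar : (nat -> R) -> H) (Hn : set H) (fd : H)
  (u : nat -> R) : Prop :=
  feasible ip Astar Hn fd u /\
  forall v, feasible ip Astar Hn fd v -> norm1 u <= norm1 v.

From HB Require Import structures.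
From mathcomp Require Import all_boot all_order all_algebra.
From mathcomp Require Import all_classical all_reals all_analysis.
From mathcomp Require Import ring lra.
Import Order.TTheory GRing.Theory Num.Theory.
Import numFieldNormedType.Exports.
Local Open Scope classical_set_scope.
Local Open Scope ring_scope.
Set Implicit Arguments. Unset Strict Implicit.

(* Let e := fd - f.  Perturbing udag by any w in l^1 with <z, A^* w> = <z, e>
   for z in Hn gives an admissible competitor, so it suffices to find such a w
   with ||w||_1 <= delta * kappa_n.  The functional A z |-> <z, e> on the
   finite-dimensional space A(Hn) of c_0 has norm at most |e| kappa_n.  Since
   the A z lie in c_0 and Hn is finite dimensional, their sup norms are already
   attained on a fixed finite set of N coordinates, so a finite-dimensional
   Hahn-Banach extension to (R^N, max norm) yields w supported on [0, N) whose
   l^1 norm is the norm of the extension. *)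
Lemma sum_nth_cat (T M : zmodType) (s1 s2 : seq T) (F : nat -> T -> M) :
  \sum_(0 <= i < size (s1 ++ s2)) F i (s1 ++ s2)`_i =
  \sum_(0 <= i < size s1) F i s1`_i + \sum_(0 <= i < size s2) F (size s1 + i)%N s2`_i.
Proof.
rewrite size_cat (big_cat_nat _ (leq_addr _ _)) //=; congr (_ + _).
  by apply: eq_big_nat => i /andP[_ hi]; rewrite nth_cat hi.
rewrite -{1}(add0n (size s1)) big_addn addKn; apply: eq_big_nat => i _.
by rewrite nth_cat ltnNge leq_addl /= addnK addnC.
Qed.

Section SublinearExtension.
Variables (R : realType) (V : lmodType R) (p : V -> R).
Hypothesis p_subadd : forall x y, p (x + y) <= p x + p y.
Hypothesis p_homog : forall a x, 0 < a -> a * p x <= p (a *: x).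

(* The values ts`_i prescribe a functional on the span of the vectors vs`_i;
   domination by p also makes it well defined, so no independence is needed. *)
Definition dominated (vs : seq V) (ts : seq R) : Prop :=
  forall c : nat -> R,
    \sum_(0 <= i < size vs) c i * ts`_i <= p (\sum_(0 <= i < size vs) c i *: vs`_i).

Lemma dominated_rcons vs ts e : size ts = size vs -> dominated vs ts ->
  exists tau, dominated (rcons vs e) (rcons ts tau).
Proof.
move=> sz dom.
pose S c := \sum_(0 <= i < size vs) c i *: vs`_i.
pose T c := \sum_(0 <= i < size vs) c i * ts`_i.
have SZ k c : S (fun i => k * c i) = k *: S c.
  by rewrite scaler_sumr; apply: eq_bigr => i _; rewrite scalerA.
have TZ k c : T (fun i => k * c i) = k * T c.
  by rewrite mulr_sumr; apply: eq_bigr => i _; rewrite mulrA.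
(* Every tau between the two families below extends the functional. *)
have lo_le_hi c c' : T c - p (S c - e) <= p (S c' + e) - T c'.
  have := dom (fun i => c i + c' i).
  rewrite (eq_bigr (fun i => c i * ts`_i + c' i * ts`_i)) => [|i _]; last exact: mulrDl.
  rewrite (eq_bigr (fun i => c i *: vs`_i + c' i *: vs`_i)) => [|i _]; last exact: scalerDl.
  rewrite !big_split /= -/(S c) -/(S c') -/(T c) -/(T c') => h.
  have := p_subadd (S c - e) (S c' + e); rewrite addrACA addNr addr0.
  lra.
pose lo := [set T c - p (S c - e) | c in [set: nat -> R]].
have lo_sup : has_sup lo.
  split; first by exists (T (fun=> 0) - p (S (fun=> 0) - e)); exists (fun=> 0).
  by exists (p (S (fun=> 0) + e) - T (fun=> 0)) => _ [c _ <-]; exact: lo_le_hi.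
exists (sup lo) => d.
have rcons_sum (T0 : zmodType) (s : seq T0) x (F : nat -> T0 -> T0) :
    size s = size vs ->
    \sum_(0 <= i < size vs) F i (rcons s x)`_i = \sum_(0 <= i < size vs) F i s`_i.
  by move=> hs; apply: eq_big_nat => i /andP[_ hi]; rewrite nth_rcons hs hi.
rewrite size_rcons !big_nat_recr //= !nth_rcons sz ltnn eqxx.
rewrite (rcons_sum _ _ _ (fun i x => d i * x)) // (rcons_sum _ _ _ (fun i x => d i *: x)) //.
rewrite -/(S d) -/(T d); set a := d (size vs).
have homogV b x : 0 < b -> b * p (b^-1 *: x) <= p x.
  by move=> b0; have := p_homog (b^-1 *: x) b0; rewrite scalerA divff ?gt_eqF // scale1r.
have [a0|a_neq0] := eqVneq a 0; first by rewrite a0 mul0r scale0r !addr0; exact: dom.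
have [a_gt0|a_le0] := ltP 0 a.
  have : sup lo <= p (S (fun i => a^-1 * d i) + e) - T (fun i => a^-1 * d i).
    by apply: ge_sup (proj1 lo_sup) _ => _ [c _ <-]; exact: lo_le_hi.
  rewrite SZ TZ (_ : a^-1 *: S d + e = a^-1 *: (S d + a *: e)); last first.
    by rewrite scalerDr scalerA mulVf // scale1r.
  move/(ler_wpM2l (ltW a_gt0)); rewrite mulrBr mulrA divff // mul1r.
  have := homogV _ (S d + a *: e) a_gt0; lra.
have b_gt0 : 0 < - a by rewrite oppr_gt0 lt_neqAle a_neq0.
have := sup_upper_bound lo_sup (ex_intro2 _ _ (fun i => (- a)^-1 * d i) I erefl).
rewrite SZ TZ (_ : (- a)^-1 *: S d - e = (- a)^-1 *: (S d + a *: e)); last first.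
  by rewrite scalerDr scalerA invrN mulNr mulVf // scaleN1r.
move/(ler_wpM2l (ltW b_gt0)); rewrite mulrBr mulrA divff ?gt_eqF // mul1r.
have := homogV _ (S d + a *: e) b_gt0; lra.
Qed.

Lemma dominated_extend vs ts es : size ts = size vs -> dominated vs ts ->
  exists ss, size ss = size es /\ dominated (vs ++ es) (ts ++ ss).
Proof.
elim: es vs ts => [|e es IH] vs ts sz dom; first by exists [::]; rewrite !cats0.
have [tau dom'] := dominated_rcons e sz dom.
have [|ss [szs dom'']] := IH _ _ _ dom'; first by rewrite !size_rcons sz.
by exists (tau :: ss); rewrite /= szs -!cat_rcons.
Qed.

Lemma dominated_cat vs ts es ss : size ts = size vs -> size ss = size es ->
  dominated (vs ++ es) (ts ++ ss) -> forall c d : nat -> R,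
  \sum_(0 <= i < size vs) c i * ts`_i + \sum_(0 <= i < size es) d i * ss`_i <=
  p (\sum_(0 <= i < size vs) c i *: vs`_i + \sum_(0 <= i < size es) d i *: es`_i).
Proof.
move=> szt szs dom c d.
pose cd i := if (i < size vs)%N then c i else d (i - size vs)%N.
have := dom cd.
rewrite [X in X <= _](_ : _ = \sum_(0 <= i < size (ts ++ ss)) cd i * (ts ++ ss)`_i); last first.
  by rewrite !size_cat szt szs.
rewrite (sum_nth_cat _ _ (fun i x => cd i * x)) (sum_nth_cat _ _ (fun i x => cd i *: x)).
have cd_lo i : (0 <= i < size vs)%N -> cd i = c i by move=> /andP[_ hi]; rewrite /cd hi.
have cd_hi i : cd (size vs + i)%N = d i by rewrite /cd ltnNge leq_addr /= addKn.
rewrite szt szs.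
under eq_big_nat => i hi do rewrite cd_lo //.
under [X in p (X + _)]eq_big_nat => i hi do rewrite cd_lo //.
have -> : \sum_(0 <= i < size es) cd (size vs + i)%N * ss`_i =
          \sum_(0 <= i < size es) d i * ss`_i by apply: eq_bigr => i _; rewrite cd_hi.
have -> // : \sum_(0 <= i < size es) cd (size vs + i)%N *: es`_i =
             \sum_(0 <= i < size es) d i *: es`_i by apply: eq_bigr => i _; rewrite cd_hi.
Qed.
End SublinearExtension.

Section TruncatedSupNorm.
Variable R : realType.

Definition trunc_supnorm (N : nat) (x : nat -> R) : R := \big[Num.max/0]_(i < N) `|x i|.

Lemma trunc_supnorm_ge0 N x : 0 <= trunc_supnorm N x.
Proof. by rewrite /trunc_supnorm; elim/big_ind: _ => // a b ha hb; rewrite le_max ha. Qed.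

Lemma ler_trunc_supnorm N x i : (i < N)%N -> `|x i| <= trunc_supnorm N x.
Proof. by move=> hi; exact: (le_bigmax _ (fun j : 'I_N => `|x j|) (Ordinal hi)). Qed.

Lemma trunc_supnorm_le N x B : 0 <= B -> (forall i, (i < N)%N -> `|x i| <= B) ->
  trunc_supnorm N x <= B.
Proof. by move=> B0 hB; apply: bigmax_le => // i _; exact: hB. Qed.

Lemma le_trunc_supnorm N N' x : (N <= N')%N -> trunc_supnorm N x <= trunc_supnorm N' x.
Proof.
move=> NN'; apply: trunc_supnorm_le => [|i hi]; first exact: trunc_supnorm_ge0.
by apply: ler_trunc_supnorm; exact: leq_trans NN'.
Qed.

Lemma trunc_supnormD N x y :
  trunc_supnorm N (x + y) <= trunc_supnorm N x + trunc_supnorm N y.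
Proof.
apply: trunc_supnorm_le => [|i hi]; first by rewrite addr_ge0 ?trunc_supnorm_ge0.
by apply: le_trans (ler_normD _ _) _; rewrite lerD ?ler_trunc_supnorm.
Qed.

Lemma trunc_supnormZ N a x : trunc_supnorm N (a *: x) = `|a| * trunc_supnorm N x.
Proof.
rewrite /trunc_supnorm.
rewrite (big_morph (fun y => `|a| * y) (fun y z => maxr_pMr y z (normr_ge0 a)) (mulr0 _)).
by apply: eq_bigr => i _; rewrite normrM.
Qed.

Lemma trunc_supnorm_eq0 N x : (forall i, (i < N)%N -> x i = 0) -> trunc_supnorm N x = 0.
Proof.
move=> x0; apply/eqP; rewrite eq_le trunc_supnorm_ge0 andbT.
by apply: trunc_supnorm_le => // i /x0 ->; rewrite normr0.
Qed.

Lemma supnorm_trunc N x : (forall i, `|x i| <= trunc_supnorm N x) ->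
  supnorm x = trunc_supnorm N x.
Proof.
move=> hx; have x_sup : has_sup [set `|x i| | i in [set: nat]].
  by split; [exists `|x 0%N|, 0%N | exists (trunc_supnorm N x) => _ [i _ <-]].
apply/eqP; rewrite eq_le (ge_sup (proj1 x_sup)) /=; last by move=> _ [i _ <-].
apply: trunc_supnorm_le => [|i _]; last by apply: sup_upper_bound => //; exists i.
by apply: le_trans (normr_ge0 (x 0%N)) _; apply: sup_upper_bound => //; exists 0%N.
Qed.
End TruncatedSupNorm.

Section FiniteL1Duality.
Variables (R : realType) (N n : nat) (M : R) (v : 'I_n -> nat -> R) (t : 'I_n -> R).
Hypothesis M_ge0 : 0 <= M.
Hypothesis t_dominated : forall c : 'I_n -> R,
  \sum_(k < n) c k * t k <= M * trunc_supnorm N (\sum_(k < n) c k *: v k).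

Let unitv (i : nat) : nat -> R := fun j => (j == i)%:R.

Lemma sum_unitv (d : nat -> R) j : (j < N)%N -> (\sum_(0 <= i < N) d i *: unitv i) j = d j.
Proof.
move=> hj; rewrite fct_sumE (eq_bigr (fun i => if i == j then d i else 0)) => [|i _].
  by rewrite -big_mkcond big_nat1_eq /= hj.
by rewrite scalrfctE /unitv /= eq_sym; case: eqP => _; [exact: mulr1 | exact: scaler0].
Qed.

Lemma coordinate_extension : exists w : nat -> R, forall (c : 'I_n -> R) (d : nat -> R),
  \sum_(k < n) c k * t k + \sum_(0 <= i < N) d i * w i <=
  M * trunc_supnorm N (\sum_(k < n) c k *: v k + \sum_(0 <= i < N) d i *: unitv i).
Proof.
pose p x := M * trunc_supnorm N x.
have p_subadd x y : p (x + y) <= p x + p y by rewrite -mulrDr ler_wpM2l ?trunc_supnormD.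
have p_homog a x : 0 < a -> a * p x <= p (a *: x).
  by move=> a0; rewrite /p trunc_supnormZ gtr0_norm // mulrCA.
pose vs := mkseq (fun k => oapp v 0 (insub k)) n.
pose ts := mkseq (fun k => oapp t 0 (insub k)) n.
pose es := mkseq unitv N.
have szvs : size vs = n by rewrite size_mkseq.
have szts : size ts = size vs by rewrite !size_mkseq.
have nth_vs (k : 'I_n) : vs`_k = v k by rewrite nth_mkseq // valK.
have nth_ts (k : 'I_n) : ts`_k = t k by rewrite nth_mkseq // valK.
have dom : dominated p vs ts.
  move=> c; rewrite szvs !big_mkord.
  under eq_bigr do rewrite nth_ts; under [X in _ <= p X]eq_bigr do rewrite nth_vs.
  exact: (t_dominated (fun k => c k)).
have [ss [szss dom']] := dominated_extend p_subadd p_homog es szts dom.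
exists (fun i => ss`_i) => c d.
have := dominated_cat szts szss dom' (fun k => oapp c 0 (insub k)) d.
rewrite szvs size_mkseq !big_mkord.
have -> : \sum_(k < n) oapp c 0 (insub (k : nat)) * ts`_k = \sum_(k < n) c k * t k.
  by apply: eq_bigr => k _; rewrite valK nth_ts.
have -> : \sum_(k < n) oapp c 0 (insub (k : nat)) *: vs`_k = \sum_(k < n) c k *: v k.
  by apply: eq_bigr => k _; rewrite valK nth_vs.
have -> // : \sum_(i < N) d i *: es`_i = \sum_(i < N) d i *: unitv i.
by apply: eq_bigr => i _; rewrite nth_mkseq.
Qed.

Lemma l1_interpolant : exists w : nat -> R, (forall i, (N <= i)%N -> w i = 0) /\
  \sum_(0 <= i < N) `|w i| <= M /\
  forall c : 'I_n -> R,
    \sum_(0 <= i < N) w i * (\sum_(k < n) c k *: v k) i = \sum_(k < n) c k * t k.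
Proof.
have [w0 hw0] := coordinate_extension.
pose w i := if (i < N)%N then w0 i else 0.
have hw c d : \sum_(k < n) c k * t k + \sum_(0 <= i < N) d i * w i <=
    M * trunc_supnorm N (\sum_(k < n) c k *: v k + \sum_(0 <= i < N) d i *: unitv i).
  by under eq_big_nat => i /andP[_ iN] do rewrite /w iN; exact: hw0.
exists w; split => [i Ni|]; first by rewrite /w ltnNge Ni.
split.
  have := hw (fun=> 0) (fun i => Num.sg (w i)).
  rewrite [X in X + _ <= _]big1 => [|k _]; last exact: mul0r.
  rewrite [X in trunc_supnorm _ (X + _)]big1 => [|k _]; last exact: scale0r.
  rewrite !add0r.
  under eq_bigr do rewrite -normrEsg.
  move/le_trans; apply; rewrite -[leRHS]mulr1 ler_wpM2l //.
  apply: trunc_supnorm_le => // j hj.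
  by rewrite sum_unitv // normr_sg; case: (_ != 0).
move=> c; set y := \sum_(k < n) c k *: v k.
(* The vector s y minus its first N coordinates is invisible to the truncated norm. *)
have le0 s : s * (\sum_(k < n) c k * t k - \sum_(0 <= i < N) w i * y i) <= 0.
  have := hw (fun k => s * c k) (fun i => - s * y i).
  have -> : \sum_(k < n) s * c k * t k = s * \sum_(k < n) c k * t k.
    by rewrite mulr_sumr; apply: eq_bigr => k _; rewrite mulrA.
  have -> : \sum_(k < n) (s * c k) *: v k = s *: y.
    by rewrite scaler_sumr; apply: eq_bigr => k _; rewrite scalerA.
  have -> : \sum_(0 <= i < N) - s * y i * w i = - s * \sum_(0 <= i < N) w i * y i.
    by rewrite mulr_sumr; apply: eq_bigr => i _; rewrite -mulrA [y i * _]mulrC.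
  rewrite trunc_supnorm_eq0 ?mulr0 => [|j hj]; first by rewrite mulNr mulrBr.
  by rewrite addrfctE sum_unitv // scalrfctE mulNr; exact: addrN.
have := le0 1; have := le0 (-1); rewrite !mulN1r !mul1r; lra.
Qed.
End FiniteL1Duality.

Section L1Sequences.
Variable R : realType.
Implicit Types (a b u w x : nat -> R) (N : nat).

Lemma series_finite_support_cvg a N : (forall i, (N <= i)%N -> a i = 0) ->
  series a @ \oo --> \sum_(0 <= i < N) a i.
Proof.
move=> a0; apply: cvg_near_cst; exists N => // m /= Nm.
rewrite /series /= (big_cat_nat _ Nm) //= [X in _ + X]big1_seq ?addr0 // => i.
by rewrite mem_index_iota => /andP[_ /andP[Ni _]]; exact: a0.
Qed.

Lemma lim_seriesD_finite a b N : cvgn (series a) -> (forall i, (N <= i)%N -> b i = 0) ->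
  cvgn (series (a + b)) /\ limn (series (a + b)) = limn (series a) + \sum_(0 <= i < N) b i.
Proof.
move=> cva b0; have cvb := series_finite_support_cvg b0.
have cvb' : cvgn (series b) by apply/cvg_ex; exists (\sum_(0 <= i < N) b i).
by split; [exact: is_cvg_seriesD | rewrite lim_seriesD // (cvg_lim _ cvb)].
Qed.

Lemma in_l1D_finite u w N : in_l1 u -> (forall i, (N <= i)%N -> w i = 0) ->
  in_l1 (u + w) /\ norm1 (u + w) <= norm1 u + \sum_(0 <= i < N) `|w i|.
Proof.
move=> l1u w0.
have w0' i : (N <= i)%N -> `|w i| = 0 by move=> /w0 ->; rewrite normr0.
have [cv_sum lim_sum] := @lim_seriesD_finite (fun i => `|u i|) (fun i => `|w i|) N l1u w0'.
have le_sum i : `|(u + w) i| <= (fun i => `|u i|) i + (fun i => `|w i|) i by exact: ler_normD.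
have l1uw : in_l1 (u + w).
  by apply: series_le_cvg cv_sum => // i; rewrite ?addr_ge0.
by split => //; rewrite -lim_sum; apply: lim_series_le.
Qed.

Lemma l1_mul_bounded_cvg u x B : in_l1 u -> (forall i, `|x i| <= B) ->
  cvgn (series (fun i => u i * x i)).
Proof.
move=> l1u xB; apply: normed_cvg.
have B0 : 0 <= B := le_trans (normr_ge0 _) (xB 0%N).
apply: (series_le_cvg (v_ := B *: (fun i => `|u i|))) => [i|i|i|].
- exact: normr_ge0.
- by rewrite scalrfctE; apply: mulr_ge0.
- by rewrite scalrfctE /= normrM mulrC; apply: ler_wpM2r.
- exact: is_cvg_seriesZ.
Qed.
End L1Sequences.

Section FiniteRowsDetermineCoefficients.
Variables (R : realType) (n : nat) (P : nat -> 'I_n -> R).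
Hypothesis P_inj : forall c : 'I_n -> R,
  (forall i, \sum_(j < n) c j * P i j = 0) -> forall j, c j = 0.

Definition truncmx N : 'M[R]_(n, N) := \matrix_(j < n, i < N) P i j.

Lemma mul_row_truncmx N (c : 'rV[R]_n) (i : 'I_N) :
  (c *m truncmx N) 0 i = \sum_(j < n) c 0 j * P i j.
Proof. by rewrite mxE; apply: eq_bigr => j _; rewrite mxE. Qed.

Lemma kermx_truncmx_sub N M : (N <= M)%N -> (kermx (truncmx M) <= kermx (truncmx N))%MS.
Proof.
move=> NM; apply/sub_kermxP/matrixP => r i.
have := congr1 (fun (K : 'M[R]_(n, M)) => K r (widen_ord NM i)) (mulmx_ker (truncmx M)).
by rewrite !mxE => h; apply: etrans h; apply: eq_bigr => j _; rewrite !mxE.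
Qed.

(* For N whose kernel has minimal rank, the kernels for all M >= N coincide
   with it, so its rows annihilate every P i and hence vanish. *)
Lemma truncmx_row_free : exists N, row_free (truncmx N).
Proof.
pose kerdim k := `[< exists N, \rank (kermx (truncmx N)) = k >].
have kerdim_ex : exists k, kerdim k.
  by exists (\rank (kermx (truncmx 0))); apply/asboolP; exists 0%N.
case: (ex_minnP kerdim_ex) => k /asboolP[N kN] kmin.
exists N; rewrite -kermx_eq0; apply/eqP/row_matrixP => r; rewrite row0.
set c := row r (kermx (truncmx N)).
have c_ker M : (N <= M)%N -> c *m truncmx M = 0.
  move=> NM; apply/sub_kermxP; apply: submx_trans (row_sub r _) _.
  have sub := kermx_truncmx_sub NM.
  have /eqmxP -> : (kermx (truncmx M) == kermx (truncmx N))%MS; last exact: submx_refl.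
  rewrite -(mxrank_leqif_eq sub).2 eqn_leq mxrankS //= kN kmin //.
  by apply/asboolP; exists M.
apply/rowP => j; rewrite [RHS]mxE; apply: (P_inj (c := fun j => c 0 j)) => i.
have lt_i : (i < N + i.+1)%N by rewrite ltn_addl.
by rewrite -(mul_row_truncmx c (Ordinal lt_i)) c_ker ?leq_addr // mxE.
Qed.

Lemma coef_le_trunc_supnorm : exists N C, 0 <= C /\ forall (c : 'I_n -> R) j,
  `|c j| <= C * trunc_supnorm N (fun i => \sum_(j < n) c j * P i j).
Proof.
have [N /row_freeP[B tB]] := truncmx_row_free.
exists N, (\sum_(i < N) \sum_(j < n) `|B i j|); split.
  by apply: sumr_ge0 => i _; apply: sumr_ge0.
move=> c j; set y := fun i => \sum_(j < n) c j * P i j.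
have cE : c j = \sum_(i < N) y i * B i j.
  transitivity ((\row_k c k) 0 j); first by rewrite mxE.
  rewrite -[\row_k c k]mulmx1 -tB mulmxA mxE; apply: eq_bigr => i _.
  by rewrite mul_row_truncmx; congr (_ * _); apply: eq_bigr => k _; rewrite mxE.
rewrite cE; apply: le_trans (ler_norm_sum _ _ _) _.
rewrite mulr_suml; apply: ler_sum => i _; rewrite normrM mulrC.
apply: le_trans (_ : `|B i j| * trunc_supnorm N y <= _).
  by apply: ler_wpM2l => //; exact: ler_trunc_supnorm.
apply: ler_wpM2r; first exact: trunc_supnorm_ge0.
by rewrite (bigD1 j) //= lerDl sumr_ge0.
Qed.

Hypothesis P_c0 : forall j, (fun i => P i j) @ \oo --> (0 : R).

(* Beyond an index where all |P i j| are below 1/(C n + 1), the entries of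
   the combination are bounded by the maximum of the first N0 of them. *)
Lemma coef_and_tail_le_trunc_supnorm : exists N C, 0 <= C /\
  (forall (c : 'I_n -> R) j,
    `|c j| <= C * trunc_supnorm N (fun i => \sum_(j < n) c j * P i j)) /\
  (forall (c : 'I_n -> R) i,
    `|\sum_(j < n) c j * P i j| <= trunc_supnorm N (fun i => \sum_(j < n) c j * P i j)).
Proof.
have [N0 [C [C0 coefC]]] := coef_le_trunc_supnorm.
pose K := C * n%:R + 1.
have K0 : 0 < K by rewrite ltr_wpDl // mulr_ge0.
have [N1 _ P_small] : \forall i \near \oo, forall j, `|P i j| <= K^-1.
  have Ki : 0 < K^-1 by rewrite invr_gt0.
  by apply: filter_forall => j; exact: (@cvgr0_norm_le _ _ _ _ _ (fun i => P i j) (P_c0 j) _ Ki).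
exists (N0 + N1)%N, C; split => //; split => [c j|c i].
  by apply: le_trans (coefC c j) _; rewrite ler_wpM2l // le_trunc_supnorm // leq_addr.
set y := fun i => \sum_(j < n) c j * P i j.
have [iN|Ni] := ltnP i (N0 + N1); first exact: ler_trunc_supnorm.
have m0_le : trunc_supnorm N0 y <= trunc_supnorm (N0 + N1) y.
  by rewrite le_trunc_supnorm // leq_addr.
apply: le_trans m0_le; apply: le_trans (ler_norm_sum _ _ _) _.
apply: le_trans (_ : \sum_(j < n) (C * trunc_supnorm N0 y) * K^-1 <= _).
  apply: ler_sum => j _; rewrite normrM; apply: (ler_pM _ _ (coefC c j)) => //.
  by apply: P_small; rewrite /= (leq_trans (leq_addl N0 N1)).
rewrite sumr_const card_ord -mulr_natr.
have -> : C * trunc_supnorm N0 y / K * n%:R = trunc_supnorm N0 y * (C * n%:R / K) by ring.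
by rewrite ler_piMr ?trunc_supnorm_ge0 // ler_pdivrMr // mul1r lerDl.
Qed.
End FiniteRowsDetermineCoefficients.

Section ConditionNumber.
Variables (R : realType) (H : normedModType R) (A : H -> nat -> R) (Hn : set H).

Lemma supnorm_ge0 (x : nat -> R) : 0 <= supnorm x.
Proof.
rewrite /supnorm; have [x_sup|] := pselect (has_sup [set `|x i| | i in [set: nat]]).
  by apply: le_trans (normr_ge0 (x 0%N)) _; apply: sup_upper_bound => //; exists 0%N.
by move/sup_out ->.
Qed.

Lemma kappa_ge0 : 0 <= kappa A Hn.
Proof.
rewrite /kappa; set S := [set _ | _ in _].
have [S_sup|] := pselect (has_sup S); last by move/sup_out ->.
have [_ [z hz _]] := proj1 S_sup.
apply: le_trans (sup_upper_bound S_sup (ex_intro2 _ _ z hz erefl)).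
by rewrite divr_ge0 ?supnorm_ge0.
Qed.

Lemma norm_le_kappa_supnorm K z :
  (forall z, Hn z -> z <> 0 -> `|z| <= K * supnorm (A z)) ->
  (forall z, Hn z -> z <> 0 -> 0 < supnorm (A z)) ->
  Hn z -> z <> 0 -> `|z| <= kappa A Hn * supnorm (A z).
Proof.
move=> HnK Hn_pos hz z0; have s_gt0 := Hn_pos z hz z0.
have S_sup : has_sup [set `|z| / supnorm (A z) | z in [set z | Hn z /\ z <> 0]].
  split; first by exists (`|z| / supnorm (A z)), z.
  by exists K => _ [y [hy y0] <-]; rewrite ler_pdivrMr ?HnK ?Hn_pos.
rewrite -ler_pdivrMr //.
exact: (sup_upper_bound S_sup (ex_intro2 _ _ z (conj hz z0) erefl)).
Qed.
End ConditionNumber.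

Section HilbertSetting.
Variables (R : realType) (H : normedModType R) (ip : H -> H -> R) (A : H -> nat -> R).
Hypothesis ip_inner : is_inner_product ip.
Hypothesis A_linear : forall a x y i, A (a *: x + y) i = a * A x i + A y i.

Lemma ipC x y : ip x y = ip y x.
Proof. by case: ip_inner. Qed.

Lemma ipDl x y z : ip (x + y) z = ip x z + ip y z.
Proof. by case: ip_inner => _ [ipL _]; rewrite -{1}[x]scale1r ipL mul1r. Qed.

Lemma ip0l z : ip 0 z = 0.
Proof. by have := ipDl 0 0 z; rewrite addr0; lra. Qed.

Lemma ipZl a x z : ip (a *: x) z = a * ip x z.
Proof. by case: ip_inner => _ [ipL _]; rewrite -[a *: x]addr0 ipL ip0l addr0. Qed.

Lemma ipDr x y z : ip z (x + y) = ip z x + ip z y.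
Proof. by rewrite ipC ipDl !(ipC _ z). Qed.

Lemma ipZr a x z : ip z (a *: x) = a * ip z x.
Proof. by rewrite ipC ipZl ipC. Qed.

Lemma ip_suml n (b : 'I_n -> H) (c : 'I_n -> R) z :
  ip (\sum_(j < n) c j *: b j) z = \sum_(j < n) c j * ip (b j) z.
Proof.
rewrite (big_morph (ip^~ z) (fun x y => ipDl x y z) (ip0l z)).
by apply: eq_bigr => j _; rewrite ipZl.
Qed.

(* Expand || |y| x - |x| y ||^2 >= 0. *)
Lemma ip_le_norm x y : ip x y <= `|x| * `|y|.
Proof.
have [-> | x0] := eqVneq x 0; first by rewrite ip0l normr0 mul0r.
have [-> | y0] := eqVneq y 0; first by rewrite ipC ip0l normr0 mulr0.
have normE z : `|z| ^+ 2 = ip z z by case: ip_inner => _ [].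
have := sqr_ge0 (Num.norm (`|y| *: x - `|x| *: y)).
rewrite normE ipDl !ipDr -!scaleNr !ipZl !ipZr -!normE (ipC y x).
have xy0 : 0 < `|x| * `|y| by rewrite mulr_gt0 ?normr_gt0.
nra.
Qed.

Lemma A_sum n (b : 'I_n -> H) (c : 'I_n -> R) i :
  A (\sum_(j < n) c j *: b j) i = \sum_(j < n) c j * A (b j) i.
Proof.
have AD x y : A (x + y) i = A x i + A y i by rewrite -{1}[x]scale1r A_linear mul1r.
have A0 : A 0 i = 0 by have := AD 0 0; rewrite addr0; lra.
rewrite (big_morph (A^~ i) AD A0); apply: eq_bigr => j _.
by rewrite -[_ *: _]addr0 A_linear A0 addr0.
Qed.

Variables (n : nat) (b : 'I_n -> H).
Hypothesis A_c0 : forall z, in_c0 (A z).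
Hypothesis A_inj_span : forall c : 'I_n -> R,
  (forall i, A (\sum_(j < n) c j *: b j) i = 0) -> forall j, c j = 0.

Let span := [set x | exists c : 'I_n -> R, x = \sum_(j < n) c j *: b j].

Lemma norm_span_le_kappa : exists N, forall c : 'I_n -> R,
  `|\sum_(j < n) c j *: b j| <= kappa A span * trunc_supnorm N (A (\sum_(j < n) c j *: b j)).
Proof.
have AE c : A (\sum_(j < n) c j *: b j) = (fun i => \sum_(j < n) c j * A (b j) i).
  by apply/funext => i; rewrite A_sum.
have [||N [C [C0 [coefC tailC]]]] :=
  @coef_and_tail_le_trunc_supnorm R n (fun i j => A (b j) i).
- by move=> c hc; apply: A_inj_span => i; rewrite A_sum.
- by move=> j; exact: A_c0.
have supE c :
    supnorm (A (\sum_(j < n) c j *: b j)) = trunc_supnorm N (A (\sum_(j < n) c j *: b j)).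
  by rewrite AE; apply: supnorm_trunc; exact: tailC.
pose K := C * \sum_(j < n) `|b j|.
have normK c :
    `|\sum_(j < n) c j *: b j| <= K * trunc_supnorm N (A (\sum_(j < n) c j *: b j)).
  apply: le_trans (ler_norm_sum _ _ _) _; rewrite /K mulrAC mulr_sumr AE.
  by apply: ler_sum => j _; rewrite normrZ ler_wpM2r.
exists N => c; set z := \sum_(j < n) c j *: b j.
have [->|z0] := eqVneq z 0; first by rewrite normr0 mulr_ge0 ?kappa_ge0 ?trunc_supnorm_ge0.
rewrite -supE; apply: (@norm_le_kappa_supnorm _ _ _ _ K) => [_ [d ->] _|_ [d ->] d0||].
- by rewrite supE.
- rewrite supE lt_neqAle trunc_supnorm_ge0 andbT; apply: contra_notN d0 => /eqP m0.
  rewrite big1 // => j _; have := coefC d j.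
  by rewrite -AE -m0 mulr0 normr_le0 => /eqP ->; rewrite scale0r.
- by exists c.
- exact/eqP.
Qed.

Lemma l1_representer e : exists N (w : nat -> R), (forall i, (N <= i)%N -> w i = 0) /\
  \sum_(0 <= i < N) `|w i| <= `|e| * kappa A span /\
  forall z, span z -> \sum_(0 <= i < N) w i * A z i = ip z e.
Proof.
have [N zN] := norm_span_le_kappa.
have vE (c : 'I_n -> R) : \sum_(k < n) c k *: A (b k) = A (\sum_(j < n) c j *: b j).
  by apply/funext => i; rewrite fct_sumE A_sum.
have [||w [w0 [w_l1 w_rep]]] :=
  @l1_interpolant R N n (`|e| * kappa A span) (fun k => A (b k)) (fun k => ip (b k) e).
- by rewrite mulr_ge0 ?kappa_ge0.
- move=> c; rewrite vE -ip_suml; apply: le_trans (ip_le_norm _ _) _.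
  by rewrite mulrC -mulrA ler_wpM2l // mulrC.
exists N, w; split=> //; split=> // _ [c ->].
by rewrite ip_suml -w_rep vE.
Qed.
End HilbertSetting.

Lemma ip_adjoint_add_finite (R : realType) (H : normedModType R) (ip : H -> H -> R)
    (A : H -> nat -> R) (Astar : (nat -> R) -> H) (u w : nat -> R) N z B :
  is_adjoint ip A Astar -> in_l1 u -> (forall i, (N <= i)%N -> w i = 0) ->
  (forall i, `|A z i| <= B) ->
  ip (Astar (u + w)) z = ip (Astar u) z + \sum_(0 <= i < N) w i * A z i.
Proof.
move=> adj l1u w0 AzB; have [l1uw _] := in_l1D_finite l1u w0.
have wAz0 i : (N <= i)%N -> w i * A z i = 0 by move=> /w0 ->; rewrite mul0r.
rewrite !adj // (_ : (fun i => _) = (fun i => u i * A z i) + (fun i => w i * A z i)).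
  by have [_ ->] := lim_seriesD_finite (l1_mul_bounded_cvg l1u AzB) wAz0.
by apply/funext => i; rewrite !addrfctE mulrDl.
Qed.

Unset Implicit Arguments. Set Strict Implicit.

Theorem lemma1 (R : realType) (H : completeNormedModType R)
  (ip : H -> H -> R) (A : H -> nat -> R) (Astar : (nat -> R) -> H)
  (Hn : set H) (n : nat) (f : H) (udag : nat -> R) (delta : R) (fd : H)
  (un : nat -> R) :
  is_inner_product ip ->
  bounded_linear_to_c0 A ->
  is_adjoint ip A Astar ->
  subspace_of_dim Hn n ->
  (forall z, Hn z -> A z = (fun _ => 0) -> z = 0) ->
  in_l1 udag -> Astar udag = f ->
  0 < delta -> `|fd - f| <= delta ->
  is_l1_minimizer ip Astar Hn fd un ->
  norm1 un <= delta * kappa A Hn + norm1 udag.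
Proof.
move=> ip_inner [A_lin [A_c0 [C A_bound]]] adj [b [b_free ->]] A_inj l1udag Audag _ fd_f.
move=> [_ un_min].
have A_inj_span c : (forall i, A (\sum_(j < n) c j *: b j) i = 0) -> forall j, c j = 0.
  by move=> Ac0; apply: b_free; apply: A_inj; [exists c | apply/funext].
have [N [w [w0 [w_l1 w_rep]]]] := l1_representer ip_inner A_lin A_c0 A_inj_span (fd - f).
have [l1v norm_v] := in_l1D_finite l1udag w0.
have feas_v z : (exists c : 'I_n -> R, z = \sum_(j < n) c j *: b j) ->
    ip z (Astar (udag + w)) = ip z fd.
  move=> hz; rewrite ipC // (ip_adjoint_add_finite adj l1udag w0 (A_bound z)).
  by rewrite Audag w_rep // (ipC _ f) // -ipDr // addrC subrK.
have := un_min _ (conj l1v feas_v).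
set kap := kappa A _ in w_l1 *.
have := ler_wpM2r (kappa_ge0 A _ : 0 <= kap) fd_f.
lra.
Qed.
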